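(* Let $\vec S_n(t),\bar{\vec S}_n(t)\in\mathbb{C}^m$, $v_n(t)$ ($n\in\mathbb{Z}$) satisfy the discrete multicomponent Yajima--Oikawa system \begin{align*} \mathrm{i}\,\vec S_{n,t}&=v_n(\vec S_{n+1}+\vec S_{n-1})-c\,\vec S_n,\\ \mathrm{i}\,\bar{\vec S}_{n,t}&=-v_n(\bar{\vec S}_{n+1}+\bar{\vec S}_{n-1})+c\,\bar{\vec S}_n,\\ v_{n,t}&=\tfrac12 v_n\,\Delta_n^+\big(\langle\vec S_n,\bar{\vec S}_{n-1}\rangle+\langle\vec S_{n-1},\bar{\vec S}_n\rangle\big). \end{align*} Define scalars $F_n^{(j)}$ and vectors $\vec G_n^{(j)},\vec H_n^{(j)}$ ($j\ge0$) recursively by $F_n^{(0)}=1$ and \begin{align*} F_n^{(j)}&=v_nv_{n+1}\sum_{k=0}^{j-2}F_n^{(k)}F_{n+1}^{(j-k-2)}+\langle\vec S_n,\vec G_n^{(j-1)}\rangle+\langle\vec H_n^{(j-1)},\bar{\vec S}_n\rangle\quad(j\ge1),\\ \vec G_n^{(j)}&=-\tfrac{\mathrm{i}}{2}F_n^{(j)}\bar{\vec S}_{n+1}+v_{n+1}\sum_{k=0}^{j-1}F_n^{(k)}\vec G_{n+1}^{(j-k-1)}-\tfrac{\mathrm{i}}{2}v_{n+1}\sum_{k=0}^{j-1}F_n^{(k)}F_{n+1}^{(j-k-1)}\bar{\vec S}_n,\\ \vec H_n^{(j)}&=-\tfrac{\mathrm{i}}{2}F_n^{(j)}\vec S_{n+1}-v_{n+1}\sum_{k=0}^{j-1}F_n^{(k)}\vec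 H_{n+1}^{(j-k-1)}+\tfrac{\mathrm{i}}{2}v_{n+1}\sum_{k=0}^{j-1}F_n^{(k)}F_{n+1}^{(j-k-1)}\vec S_n, \end{align*} (empty sums are zero). Then the system possesses infinitely many conservation laws, obtained by comparing coefficients of each power of $1/\lambda$ on both sides of the formal power series identity \[ \Big[\log v_n+\log\Big(1+\sum_{j=1}^\infty\lambda^{-j}F_n^{(j)}\Big)\Big]_t=\Delta_n^+\Big[-\frac{\mathrm{i}}{\lambda}v_{n-1}v_n\Big(1+\sum_{j=1}^\infty\lambda^{-j}F_n^{(j)}\Big)-\mathrm{i}\lambda\frac{1}{1+\sum_{j=1}^\infty\lambda^{-j}F_{n-1}^{(j)}}\Big], \] where $\log(1+x)$ and $1/(1+x)$ are expanded as formal power series in $1/\lambda$.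
   Context: $\langle\vec a,\vec b\rangle=\sum_i a^{(i)}b^{(i)}$ is the bilinear scalar product (no conjugation); $\Delta_n^+f_n:=f_{n+1}-f_n$; $c$ is an arbitrary constant; $\bar{\vec S}_n$ is an independent vector variable. A conservation law is an identity of the form $(\rho_n)_t=\Delta_n^+ J_n$ with $\rho_n,J_n$ local functions of the dependent variables. *)

From Stdlib Require Import Reals ZArith Arith.
Open Scope R_scope.

Definition Cplx : Type := (R * R)%type.
Definition C0 : Cplx := (0, 0).
Definition C1 : Cplx := (1, 0).
Definition Ci : Cplx := (0, 1).
Definition RtoC (r : R) : Cplx := (r, 0).
Definition Cadd (x y : Cplx) : Cplx := (fst x + fst y, snd x + snd y).
Definition Copp (x : Cplx) : Cplx := (- fst x, - snd x).
Definition Csub (x y : Cplx) : Cplx := Cadd x (Copp y).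
Definition Cmul (x y : Cplx) : Cplx :=
  (fst x * fst y - snd x * snd y, fst x * snd y + snd x * fst y).
Definition Cinv (x : Cplx) : Cplx :=
  (fst x / (fst x ^ 2 + snd x ^ 2), - snd x / (fst x ^ 2 + snd x ^ 2)).
Definition Cdiv (x y : Cplx) : Cplx := Cmul x (Cinv y).

Definition Cderiv (f : R -> Cplx) (t : R) (d : Cplx) : Prop :=
  derivable_pt_lim (fun s => fst (f s)) t (fst d) /\
  derivable_pt_lim (fun s => snd (f s)) t (snd d).

Fixpoint csum (n : nat) (f : nat -> Cplx) : Cplx :=
  match n with
  | O => C0
  | S n' => Cadd (csum n' f) (f n')
  end.

(** * Vectors in Cplx^m, represented as nat -> Cplx (only components < m matter) *)
Definition vec : Type := nat -> Cplx.
Definition vadd (x y : vec) : vec := fun k => Cadd (x k) (y k).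
Definition vscal (a : Cplx) (x : vec) : vec := fun k => Cmul a (x k).
Definition vsum (n : nat) (f : nat -> vec) : vec := fun k => csum n (fun j => f j k).
(** bilinear scalar product <a,b> = sum_{k<m} a^(k) b^(k), no conjugation *)
Definition dot (m : nat) (a b : vec) : Cplx := csum m (fun k => Cmul (a k) (b k)).

Definition half : Cplx := RtoC (/ 2).
Definition mi2 : Cplx := Cmul (Copp Ci) half.
Definition pi2 : Cplx := Cmul Ci half.

(** * The recursion for F_n^(j), G_n^(j), H_n^(j) at a fixed time.
    [tab m Sf Sbf v j k n] = (F_n^(k), G_n^(k), H_n^(k)) for every k <= j. *)
Definition triple : Type := (Cplx * vec * vec)%type.

Fixpoint tab (m : nat) (Sf Sbf : Z -> vec) (v : Z -> Cplx) (j : nat)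
  : nat -> Z -> triple :=
  match j with
  | O => fun _ n =>
      (C1, vscal mi2 (Sbf (n + 1)%Z), vscal mi2 (Sf (n + 1)%Z))
  | S j' =>
      let T := tab m Sf Sbf v j' in
      let F k n := fst (fst (T k n)) in
      let G k n := snd (fst (T k n)) in
      let H k n := snd (T k n) in
      let Fn n :=
        Cadd (Cmul (Cmul (v n) (v (n + 1)%Z))
                   (csum j' (fun k => Cmul (F k n) (F (j' - 1 - k)%nat (n + 1)%Z))))
             (Cadd (dot m (Sf n) (G j' n)) (dot m (H j' n) (Sbf n))) in
      let Gn n :=
        vadd (vadd (vscal (Cmul mi2 (Fn n)) (Sbf (n + 1)%Z))
                   (vscal (v (n + 1)%Z)
                      (vsum (S j') (fun k => vscal (F k n) (G (j' - k)%nat (n + 1)%Z)))))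
             (vscal (Cmul (Cmul mi2 (v (n + 1)%Z))
                          (csum (S j') (fun k => Cmul (F k n) (F (j' - k)%nat (n + 1)%Z))))
                    (Sbf n)) in
      let Hn n :=
        vadd (vadd (vscal (Cmul mi2 (Fn n)) (Sf (n + 1)%Z))
                   (vscal (Copp (v (n + 1)%Z))
                      (vsum (S j') (fun k => vscal (F k n) (H (j' - k)%nat (n + 1)%Z)))))
             (vscal (Cmul (Cmul pi2 (v (n + 1)%Z))
                          (csum (S j') (fun k => Cmul (F k n) (F (j' - k)%nat (n + 1)%Z))))
                    (Sf n)) in
      fun k n => if (k <=? j')%nat then T k n else (Fn n, Gn n, Hn n)
  end.

Definition FF (m : nat) (Sf Sbf : Z -> vec) (v : Z -> Cplx) (j : nat) (n : Z) : Cplx :=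
  fst (fst (tab m Sf Sbf v j j n)).

(** * Formal power series in mu = 1/lambda, as coefficient sequences *)
Definition ps : Type := nat -> Cplx.
Definition psmul (a b : ps) : ps :=
  fun j => csum (S j) (fun i => Cmul (a i) (b (j - i)%nat)).
Fixpoint pspow (a : ps) (k : nat) : ps :=
  match k with
  | O => fun j => if (j =? 0)%nat then C1 else C0
  | S k' => psmul a (pspow a k')
  end.
(** log(1+X) = sum_{k>=1} (-1)^(k+1) X^k / k, for X with zero constant term
    (X^k has no terms below mu^k, so the sum for coefficient j stops at k = j) *)
Definition pslog1p (a : ps) : ps :=
  fun j => csum j (fun k => Cmul (RtoC ((-1) ^ k / INR (S k))) (pspow a (S k) j)).
(** 1/(1+X) = sum_{k>=0} (-1)^k X^k, for X with zero constant term *)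
Definition psinv1p (a : ps) : ps :=
  fun j => csum (S j) (fun k => Cmul (RtoC ((-1) ^ k)) (pspow a k j)).
Definition ps1p (a : ps) : ps := fun j => if (j =? 0)%nat then Cadd C1 (a j) else a j.

Definition Xser (m : nat) (Sf Sbf : Z -> vec) (v : Z -> Cplx) (n : Z) : ps :=
  fun j => if (j =? 0)%nat then C0 else FF m Sf Sbf v j n.

(** density: coefficient of lambda^{-p} in log(1 + X_n)
    (the coefficient of lambda^0 of log v_n is treated separately) *)
Definition rho (m : nat) (Sf Sbf : Z -> vec) (v : Z -> Cplx) (p : nat) (n : Z) : Cplx :=
  pslog1p (Xser m Sf Sbf v n) p.

(** flux: coefficient of lambda^{-p} in
    -(i/lambda) v_{n-1} v_n (1 + X_n) - i lambda / (1 + X_{n-1}) *)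
Definition flux (m : nat) (Sf Sbf : Z -> vec) (v : Z -> Cplx) (p : nat) (n : Z) : Cplx :=
  Cadd (Cmul (Copp Ci)
             (match p with
              | O => C0
              | S p' => Cmul (Cmul (v (n - 1)%Z) (v n)) (ps1p (Xser m Sf Sbf v n) p')
              end))
       (Cmul (Copp Ci) (psinv1p (Xser m Sf Sbf v (n - 1)%Z) (S p))).

(* Work with generating series in μ = 1/λ: F_n = 1 + X_n = Σ_j F_n^(j) μ^j, and vector series
   g_n, h_n with G_n = F_n g_n, H_n = F_n h_n.  The recursion for (F, G, H) becomes
   F_n (1 - μ A_n) = 1 with A_n = μ v_n v_(n+1) F_(n+1) + P_n, P_n = <S_n, g_n> + <h_n, S̄_n>,
   together with first order recursions in n for g_n and h_n.  Along the flow one proves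
   F_(n,t) = F_n K_n with K_n = -w_n/2 + i P_n - i P_(n-1), where v_(n,t) = v_n w_n / 2; this is an
   induction on the number of coefficients, since the recursions express the coefficients of
   degree j + 1 at n through those of degree <= j at n + 1, and the differentiated recursions
   close up thanks to F_n (1 - μ A_n) = 1.  Hence (log F_n)_t = K_n.  On the flux side,
   1/F_(n-1) = 1 - μ A_(n-1) shows that the flux at n is exactly i P_(n-1), so its forward
   difference is K_n + w_n/2 = K_n + (log v_n)_t. *)

From Pilot Require Import Defs.
From Stdlib Require Import Reals ZArith Arith.
From Stdlib Require Import Lia Lra Ring Field FunctionalExtensionality.
Open Scope R_scope.
(* Re-import so that [C0], [C1] mean the complex constants, not the ones of [Reals]. *)
Import Defs.

Lemma Cplx_ring_theory : ring_theory C0 C1 Cadd Cmul Csub Copp (@eq Cplx).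
Proof.
  constructor; intros; repeat match goal with x : Cplx |- _ => destruct x end;
  unfold Csub, Cadd, Cmul, Copp, C0, C1; simpl; f_equal; ring.
Qed.
Add Ring Cplx_ring : Cplx_ring_theory.

Lemma Cmul_Cinv_r x : x <> C0 -> Cmul x (Cinv x) = C1.
Proof.
  destruct x as [a b]; intros Hx; unfold Cmul, Cinv, C1; simpl.
  assert (Hn : a * a + b * b <> 0).
  { intro E; apply Hx; unfold C0; f_equal; nra. }
  f_equal; field; replace (a ^ 2 + b ^ 2) with (a * a + b * b) by ring; exact Hn.
Qed.

Lemma Ci_mul_inj d r : Cmul Ci d = r -> d = Cmul (Copp Ci) r.
Proof. intros <-; destruct d; unfold Cmul, Copp, Ci; simpl; f_equal; ring. Qed.

Lemma csum_ext n f g : (forall i, (i < n)%nat -> f i = g i) -> csum n f = csum n g.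
Proof.
  induction n as [|n IH]; simpl; intros H; [reflexivity|].
  rewrite IH, H by (intros; try apply H; lia); reflexivity.
Qed.

Lemma csum_add n f g : csum n (fun i => Cadd (f i) (g i)) = Cadd (csum n f) (csum n g).
Proof. induction n as [|n IH]; simpl; [|rewrite IH]; ring. Qed.

Lemma csum_mult_l n a f : csum n (fun i => Cmul a (f i)) = Cmul a (csum n f).
Proof. induction n as [|n IH]; simpl; [|rewrite IH]; ring. Qed.

Lemma csum_zero n f : (forall i, (i < n)%nat -> f i = C0) -> csum n f = C0.
Proof.
  induction n as [|n IH]; simpl; intros H; [reflexivity|].
  rewrite IH, H by (intros; try apply H; lia); ring.
Qed.

Lemma csum_S_l n f : csum (S n) f = Cadd (f O) (csum n (fun i => f (S i))).
Proof. induction n as [|n IH]; [simpl; ring|]. change (csum (S (S n)) f) with (Cadd (csum (S n) f) (f (S n))). rewrite IH; simpl; ring. Qed.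

Lemma csum_rev n f : csum n f = csum n (fun i => f (n - 1 - i)%nat).
Proof.
  induction n as [|n IH]; [reflexivity|].
  rewrite (csum_S_l n (fun i => f (S n - 1 - i)%nat)); simpl csum at 1.
  rewrite (csum_ext n (fun i => f (S n - 1 - S i)%nat) (fun i => f (n - 1 - i)%nat))
    by (intros; f_equal; lia).
  rewrite <- IH; replace (S n - 1 - 0)%nat with n by lia; ring.
Qed.

Lemma csum_triangle j (f : nat -> nat -> Cplx) :
  csum (S j) (fun i => csum (S (j - i)) (fun k => f i k)) =
  csum (S j) (fun l => csum (S l) (fun i => f i (l - i)%nat)).
Proof.
  induction j as [|j IH]; [reflexivity|].
  change (csum (S (S j)) (fun l => csum (S l) (fun i => f i (l - i)%nat)))
    with (Cadd (csum (S j) (fun l => csum (S l) (fun i => f i (l - i)%nat)))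
               (csum (S (S j)) (fun i => f i (S j - i)%nat))).
  rewrite <- IH.
  change (csum (S (S j)) (fun i => csum (S (S j - i)) (fun k => f i k)))
    with (Cadd (csum (S j) (fun i => csum (S (S j - i)) (fun k => f i k)))
               (csum (S (S j - S j)) (fun k => f (S j) k))).
  rewrite (csum_ext (S j) (fun i => csum (S (S j - i)) (fun k => f i k))
             (fun i => Cadd (csum (S (j - i)) (fun k => f i k)) (f i (S j - i)%nat)))
    by (intros i Hi; replace (S j - i)%nat with (S (j - i)) by lia; reflexivity).
  rewrite csum_add; replace (S j - S j)%nat with O by lia.
  change (csum (S (S j)) (fun i => f i (S j - i)%nat)) with
    (Cadd (csum (S j) (fun i => f i (S j - i)%nat)) (f (S j) (S j - S j)%nat)).
  replace (S j - S j)%nat with O by lia; simpl csum at 4; ring.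
Qed.

Lemma csum_trunc j N f : (j <= N)%nat -> (forall k, (j < k <= N)%nat -> f k = C0) ->
  csum (S N) f = csum (S j) f.
Proof.
  intros Hj Hf; induction N as [|N IH].
  - replace j with O by lia; reflexivity.
  - destruct (Nat.eq_dec j (S N)) as [->|Hne]; [reflexivity|].
    change (csum (S (S N)) f) with (Cadd (csum (S N) f) (f (S N))).
    rewrite IH, Hf by (intros; try apply Hf; lia); ring.
Qed.

Definition ps0 : ps := fun _ => C0.
Definition ps1 : ps := fun j => if (j =? 0)%nat then C1 else C0.
Definition psadd (a b : ps) : ps := fun j => Cadd (a j) (b j).
Definition psopp (a : ps) : ps := fun j => Copp (a j).
Definition pssub (a b : ps) : ps := psadd a (psopp b).

Lemma psmul_comm a b : psmul a b = psmul b a.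
Proof.
  apply functional_extensionality; intro j; unfold psmul.
  rewrite csum_rev; apply csum_ext; intros i Hi.
  replace (S j - 1 - i)%nat with (j - i)%nat by lia.
  replace (j - (j - i))%nat with i by lia; ring.
Qed.

Lemma psmul_assoc a b c : psmul a (psmul b c) = psmul (psmul a b) c.
Proof.
  apply functional_extensionality; intro j; unfold psmul.
  transitivity (csum (S j) (fun i => csum (S (j - i))
                  (fun k => Cmul (Cmul (a i) (b k)) (c (j - i - k)%nat)))).
  { apply csum_ext; intros i Hi; rewrite <- csum_mult_l; apply csum_ext; intros; ring. }
  rewrite csum_triangle; apply csum_ext; intros l Hl.
  rewrite (Rmul_comm Cplx_ring_theory), <- csum_mult_l; apply csum_ext; intros i Hi.
  replace (j - i - (l - i))%nat with (j - l)%nat by lia; ring.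
Qed.

Lemma psmul_add_distr_r a b c : psmul (psadd a b) c = psadd (psmul a c) (psmul b c).
Proof.
  apply functional_extensionality; intro j; unfold psmul, psadd.
  rewrite <- csum_add; apply csum_ext; intros; ring.
Qed.

Lemma psmul_1_l a : psmul ps1 a = a.
Proof.
  apply functional_extensionality; intro j; unfold psmul.
  rewrite csum_S_l, csum_zero by (intros; unfold ps1; simpl; ring).
  unfold ps1; simpl; replace (j - 0)%nat with j by lia; ring.
Qed.

Lemma ps_ring_theory : ring_theory ps0 ps1 psadd psmul pssub psopp (@eq ps).
Proof.
  constructor; intros;
    try apply psmul_1_l; try apply psmul_comm; try apply psmul_assoc;
    try apply psmul_add_distr_r;
    apply functional_extensionality; intros; cbv [ps0 psadd psopp pssub]; ring.
Qed.
Add Ring ps_ring : ps_ring_theory.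

Declare Scope ps_scope.
Delimit Scope ps_scope with ps.
Infix "⊕" := psadd (at level 50, left associativity) : ps_scope.
Infix "⊖" := pssub (at level 50, left associativity) : ps_scope.
Infix "⊗" := psmul (at level 40, left associativity) : ps_scope.
Notation "⊖ x" := (psopp x) (at level 35, right associativity) : ps_scope.
Local Open Scope ps_scope.

(* [psX] is the variable [μ = 1/λ]. *)
Definition psC (x : Cplx) : ps := fun j => if (j =? 0)%nat then x else C0.
Definition psX : ps := fun j => if (j =? 1)%nat then C1 else C0.

Lemma psC_add a b : psC (Cadd a b) = psC a ⊕ psC b.
Proof. apply functional_extensionality; intros [|j]; unfold psC, psadd; simpl; ring. Qed.

Lemma psC_opp a : psC (Copp a) = ⊖ psC a.
Proof. apply functional_extensionality; intros [|j]; unfold psC, psopp; simpl; ring. Qed.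

Lemma psC_sub a b : psC (Csub a b) = psC a ⊖ psC b.
Proof. unfold Csub, pssub; rewrite psC_add, psC_opp; reflexivity. Qed.

Lemma psC_0 : psC C0 = ps0.
Proof. apply functional_extensionality; intros [|j]; reflexivity. Qed.

Lemma psC_1 : psC C1 = ps1.
Proof. reflexivity. Qed.

Lemma psmul_C_l a x j : (psC a ⊗ x) j = Cmul a (x j).
Proof.
  unfold psmul; rewrite csum_S_l, csum_zero by (intros; unfold psC; simpl; ring).
  unfold psC; simpl; replace (j - 0)%nat with j by lia; ring.
Qed.

Lemma psmul_C_r a x j : (x ⊗ psC a) j = Cmul (x j) a.
Proof. rewrite psmul_comm, psmul_C_l; ring. Qed.

Lemma psC_mul a b : psC (Cmul a b) = psC a ⊗ psC b.
Proof.
  apply functional_extensionality; intro j; rewrite psmul_C_l.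
  destruct j; unfold psC; simpl; ring.
Qed.

Lemma psmul_coef_0 a b : (a ⊗ b) O = Cmul (a O) (b O).
Proof. unfold psmul; simpl; ring. Qed.

Lemma psmul_X_0 x : (psX ⊗ x) O = C0.
Proof. unfold psmul, psX; simpl; ring. Qed.

Lemma psmul_X_S x j : (psX ⊗ x) (S j) = x j.
Proof.
  unfold psmul; rewrite csum_S_l, csum_S_l, csum_zero by (intros; unfold psX; simpl; ring).
  unfold psX; simpl; replace (j - 0)%nat with j by lia; ring.
Qed.

Lemma psmul_Xr_S a b j :
  (a ⊗ (psX ⊗ b)) (S j) = csum (S j) (fun i => Cmul (a i) (b (j - i)%nat)).
Proof.
  replace (a ⊗ (psX ⊗ b)) with (psX ⊗ (a ⊗ b)) by ring.
  rewrite psmul_X_S; reflexivity.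
Qed.

Lemma psmul_coef_ext a b b' p :
  (forall i, (i <= p)%nat -> b i = b' i) -> (a ⊗ b) p = (a ⊗ b') p.
Proof. intros H; unfold psmul; apply csum_ext; intros; rewrite H by lia; reflexivity. Qed.

Fixpoint pssum (n : nat) (f : nat -> ps) : ps :=
  match n with O => ps0 | S n' => pssum n' f ⊕ f n' end.

Lemma pssum_coef n f j : pssum n f j = csum n (fun k => f k j).
Proof. induction n as [|n IH]; simpl; [|unfold psadd; rewrite IH]; reflexivity. Qed.

Lemma pssum_ext n f g : (forall k, (k < n)%nat -> f k = g k) -> pssum n f = pssum n g.
Proof.
  induction n as [|n IH]; simpl; intros H; [reflexivity|].
  rewrite IH, H by (intros; try apply H; lia); reflexivity.
Qed.

Lemma pssum_add n f g : pssum n (fun k => f k ⊕ g k) = pssum n f ⊕ pssum n g.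
Proof. induction n as [|n IH]; simpl; [|rewrite IH]; ring. Qed.

Lemma pssum_mult_l n a f : pssum n (fun k => a ⊗ f k) = a ⊗ pssum n f.
Proof. induction n as [|n IH]; simpl; [|rewrite IH]; ring. Qed.

Definition psvec : Type := nat -> ps.
Definition pvadd (u w : psvec) : psvec := fun k => u k ⊕ w k.
Definition pvscal (a : ps) (u : psvec) : psvec := fun k => a ⊗ u k.
Definition pvC (x : vec) : psvec := fun k => psC (x k).
Definition pdot (m : nat) (u w : psvec) : ps := pssum m (fun k => u k ⊗ w k).

Lemma pdot_add_l m u1 u2 w : pdot m (pvadd u1 u2) w = pdot m u1 w ⊕ pdot m u2 w.
Proof. unfold pdot, pvadd; rewrite <- pssum_add; apply pssum_ext; intros; ring. Qed.

Lemma pdot_add_r m u w1 w2 : pdot m u (pvadd w1 w2) = pdot m u w1 ⊕ pdot m u w2.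
Proof. unfold pdot, pvadd; rewrite <- pssum_add; apply pssum_ext; intros; ring. Qed.

Lemma pdot_scal_l m a u w : pdot m (pvscal a u) w = a ⊗ pdot m u w.
Proof. unfold pdot, pvscal; rewrite <- pssum_mult_l; apply pssum_ext; intros; ring. Qed.

Lemma pdot_scal_r m a u w : pdot m u (pvscal a w) = a ⊗ pdot m u w.
Proof. unfold pdot, pvscal; rewrite <- pssum_mult_l; apply pssum_ext; intros; ring. Qed.

Lemma psC_dot m a b : psC (dot m a b) = pdot m (pvC a) (pvC b).
Proof.
  unfold dot, pdot, pvC; induction m as [|m IH]; simpl; [apply psC_0|].
  rewrite psC_add, IH, psC_mul; reflexivity.
Qed.

Lemma pspow_coef_low X : X O = C0 -> forall k j, (j < k)%nat -> pspow X k j = C0.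
Proof.
  intros H0 k; induction k as [|k IH]; intros j Hj; [lia|].
  simpl; unfold psmul; rewrite csum_S_l, H0, csum_zero by (intros; rewrite IH by lia; ring).
  ring.
Qed.

Definition alt_sign (k : nat) : Cplx := RtoC ((-1) ^ k).

Lemma psC_alt_sign_S k : psC (alt_sign (S k)) = ⊖ psC (alt_sign k).
Proof. rewrite <- psC_opp; f_equal; unfold alt_sign, RtoC, Copp; simpl; f_equal; ring. Qed.

Definition psinv1p_upto (X : ps) (N : nat) : ps :=
  pssum (S N) (fun k => psC (alt_sign k) ⊗ pspow X k).

Lemma psinv1p_upto_spec X N :
  (ps1 ⊕ X) ⊗ psinv1p_upto X N = ps1 ⊕ psC (alt_sign N) ⊗ pspow X (S N).
Proof.
  unfold psinv1p_upto; induction N as [|N IH].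
  - change (pssum 1 (fun k => psC (alt_sign k) ⊗ pspow X k)) with (ps0 ⊕ ps1 ⊗ ps1).
    change (pspow X 1) with (X ⊗ ps1); replace (psC (alt_sign 0)) with ps1 by reflexivity; ring.
  - change (pssum (S (S N)) (fun k => psC (alt_sign k) ⊗ pspow X k))
      with (pssum (S N) (fun k => psC (alt_sign k) ⊗ pspow X k)
            ⊕ psC (alt_sign (S N)) ⊗ pspow X (S N)).
    transitivity ((ps1 ⊕ X) ⊗ pssum (S N) (fun k => psC (alt_sign k) ⊗ pspow X k)
                  ⊕ psC (alt_sign (S N)) ⊗ (pspow X (S N) ⊕ X ⊗ pspow X (S N))); [ring|].
    rewrite IH, psC_alt_sign_S; change (pspow X (S (S N))) with (X ⊗ pspow X (S N)); ring.
Qed.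

Lemma psinv1p_coef_upto X N j :
  X O = C0 -> (j <= N)%nat -> psinv1p X j = psinv1p_upto X N j.
Proof.
  intros H0 Hj; unfold psinv1p_upto; rewrite pssum_coef; unfold psinv1p.
  rewrite (csum_trunc j N) by (try lia; intros; rewrite psmul_C_l, pspow_coef_low by (auto; lia); ring).
  apply csum_ext; intros; rewrite psmul_C_l; reflexivity.
Qed.

Lemma psinv1p_spec X : X O = C0 -> (ps1 ⊕ X) ⊗ psinv1p X = ps1.
Proof.
  intros H0; apply functional_extensionality; intro j.
  rewrite (psmul_coef_ext _ _ (psinv1p_upto X j)) by (intros; apply psinv1p_coef_upto; auto).
  rewrite psinv1p_upto_spec; unfold psadd at 1; rewrite psmul_C_l, pspow_coef_low by (auto; lia).
  ring.
Qed.

Lemma ps1p_eq X : ps1p X = ps1 ⊕ X.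
Proof. apply functional_extensionality; intros [|j]; unfold ps1p, ps1, psadd; simpl; ring. Qed.

Lemma Cderiv_ext f g t d : (forall s, f s = g s) -> Cderiv f t d -> Cderiv g t d.
Proof. intros H; replace g with f by (apply functional_extensionality; auto); auto. Qed.

Lemma Cderiv_eq_compat f t d d' : d = d' -> Cderiv f t d -> Cderiv f t d'.
Proof. intros <-; auto. Qed.

Lemma Cderiv_const c t : Cderiv (fun _ => c) t C0.
Proof. split; apply derivable_pt_lim_const. Qed.

Lemma Cderiv_add f g t a b :
  Cderiv f t a -> Cderiv g t b -> Cderiv (fun s => Cadd (f s) (g s)) t (Cadd a b).
Proof.
  intros [H1 H2] [H3 H4]; split.
  - apply (derivable_pt_lim_plus (fun s => fst (f s)) (fun s => fst (g s))); auto.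
  - apply (derivable_pt_lim_plus (fun s => snd (f s)) (fun s => snd (g s))); auto.
Qed.

Lemma Cderiv_opp f t a : Cderiv f t a -> Cderiv (fun s => Copp (f s)) t (Copp a).
Proof.
  intros [H1 H2]; split.
  - apply (derivable_pt_lim_opp (fun s => fst (f s))); auto.
  - apply (derivable_pt_lim_opp (fun s => snd (f s))); auto.
Qed.

Lemma Cderiv_mul f g t a b : Cderiv f t a -> Cderiv g t b ->
  Cderiv (fun s => Cmul (f s) (g s)) t (Cadd (Cmul a (g t)) (Cmul (f t) b)).
Proof.
  intros [H1 H2] [H3 H4]; split.
  - replace (fst (Cadd (Cmul a (g t)) (Cmul (f t) b))) with
      (fst a * fst (g t) + fst (f t) * fst b - (snd a * snd (g t) + snd (f t) * snd b))
      by (simpl; ring).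
    apply (derivable_pt_lim_minus (fun s => fst (f s) * fst (g s)) (fun s => snd (f s) * snd (g s)));
      apply derivable_pt_lim_mult; auto.
  - replace (snd (Cadd (Cmul a (g t)) (Cmul (f t) b))) with
      (fst a * snd (g t) + fst (f t) * snd b + (snd a * fst (g t) + snd (f t) * fst b))
      by (simpl; ring).
    apply (derivable_pt_lim_plus (fun s => fst (f s) * snd (g s)) (fun s => snd (f s) * fst (g s)));
      apply derivable_pt_lim_mult; auto.
Qed.

Lemma Cderiv_csum n f t df : (forall k, (k < n)%nat -> Cderiv (fun s => f k s) t (df k)) ->
  Cderiv (fun s => csum n (fun k => f k s)) t (csum n df).
Proof.
  induction n as [|n IH]; intros H; simpl; [apply Cderiv_const|].
  apply Cderiv_add; [apply IH; intros|]; apply H; lia.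
Qed.

Lemma Cderiv_unique f t a b : Cderiv f t a -> Cderiv f t b -> a = b.
Proof.
  intros [H1 H2] [H3 H4]; destruct a, b; simpl in *.
  f_equal; eapply uniqueness_limite; eauto.
Qed.

Definition ps_deriv_lt (a : R -> ps) (t : R) (d : ps) (N : nat) : Prop :=
  forall i, (i < N)%nat -> Cderiv (fun s => a s i) t (d i).

Lemma ps_deriv_lt_ext a b t d N :
  (forall s, a s = b s) -> ps_deriv_lt a t d N -> ps_deriv_lt b t d N.
Proof. intros E H i Hi; apply (Cderiv_ext (fun s => a s i)); [intros; rewrite E|apply H]; auto. Qed.

Lemma ps_deriv_lt_eq_compat a t d d' N : d = d' -> ps_deriv_lt a t d N -> ps_deriv_lt a t d' N.
Proof. intros <-; auto. Qed.

Lemma ps_deriv_lt_le a t d N N' : (N' <= N)%nat -> ps_deriv_lt a t d N -> ps_deriv_lt a t d N'.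
Proof. intros HN H i Hi; apply H; lia. Qed.

Lemma ps_deriv_lt_const c t N : ps_deriv_lt (fun _ => c) t ps0 N.
Proof. intros i Hi; apply Cderiv_const. Qed.

Lemma ps_deriv_lt_C x t dx N : Cderiv x t dx -> ps_deriv_lt (fun s => psC (x s)) t (psC dx) N.
Proof. intros H [|i] Hi; [exact H|apply (Cderiv_const C0)]. Qed.

Lemma ps_deriv_lt_add a b t da db N :
  ps_deriv_lt a t da N -> ps_deriv_lt b t db N -> ps_deriv_lt (fun s => a s ⊕ b s) t (da ⊕ db) N.
Proof. intros H1 H2 i Hi; apply Cderiv_add; auto. Qed.

Lemma ps_deriv_lt_opp a t da N :
  ps_deriv_lt a t da N -> ps_deriv_lt (fun s => ⊖ a s) t (⊖ da) N.
Proof. intros H i Hi; apply Cderiv_opp; auto. Qed.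

Lemma ps_deriv_lt_mul a b t da db N :
  ps_deriv_lt a t da N -> ps_deriv_lt b t db N ->
  ps_deriv_lt (fun s => a s ⊗ b s) t (da ⊗ b t ⊕ a t ⊗ db) N.
Proof.
  intros H1 H2 i Hi; unfold psadd; unfold psmul; rewrite <- csum_add.
  apply (Cderiv_csum (S i) (fun k s => Cmul (a s k) (b s (i - k)%nat))).
  intros k Hk; apply Cderiv_mul; [apply H1|apply H2]; lia.
Qed.

Lemma ps_deriv_lt_X a t da N :
  ps_deriv_lt a t da N -> ps_deriv_lt (fun s => psX ⊗ a s) t (psX ⊗ da) (S N).
Proof.
  intros H [|i] Hi.
  - rewrite psmul_X_0; apply (Cderiv_ext (fun _ => C0)); [intros; rewrite psmul_X_0; auto|].
    apply Cderiv_const.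
  - rewrite psmul_X_S; apply (Cderiv_ext (fun s => a s i)); [intros; rewrite psmul_X_S; auto|].
    apply H; lia.
Qed.

Lemma ps_deriv_lt_pdot m u w t du dw N :
  (forall k, (k < m)%nat -> ps_deriv_lt (fun s => u s k) t (du k) N) ->
  (forall k, (k < m)%nat -> ps_deriv_lt (fun s => w s k) t (dw k) N) ->
  ps_deriv_lt (fun s => pdot m (u s) (w s)) t (pdot m du (w t) ⊕ pdot m (u t) dw) N.
Proof.
  intros H1 H2 i Hi; unfold pdot; rewrite <- pssum_add, pssum_coef.
  apply (Cderiv_ext (fun s => csum m (fun k => (u s k ⊗ w s k) i))); [intros; rewrite pssum_coef; auto|].
  apply (Cderiv_csum m (fun k s => (u s k ⊗ w s k) i)).
  intros k Hk; apply (ps_deriv_lt_mul (fun s => u s k) (fun s => w s k) t (du k) (dw k) N); auto.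
Qed.

Lemma ps_deriv_lt_pvC x t dx N k : Cderiv (fun s => x s k) t (dx k) ->
  ps_deriv_lt (fun s => pvC (x s) k) t (pvC dx k) N.
Proof. apply (ps_deriv_lt_C (fun s => x s k)). Qed.

Lemma psC_INR_S k : psC (RtoC (INR (S (S k)))) = psC (RtoC (INR (S k))) ⊕ ps1.
Proof.
  rewrite <- psC_1, <- psC_add; f_equal; rewrite (S_INR (S k)).
  unfold RtoC, Cadd, C1; simpl fst; simpl snd; f_equal; ring.
Qed.

Lemma ps_deriv_lt_pspow X t dX N : ps_deriv_lt X t dX N -> forall k,
  ps_deriv_lt (fun s => pspow (X s) (S k)) t (psC (RtoC (INR (S k))) ⊗ dX ⊗ pspow (X t) k) N.
Proof.
  intros H k; induction k as [|k IH].
  - eapply ps_deriv_lt_eq_compat;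
      [|apply (ps_deriv_lt_mul X (fun s => pspow (X s) 0)); [exact H|apply (ps_deriv_lt_const ps1)]].
    replace (psC (RtoC (INR 1))) with ps1 by reflexivity.
    replace (pspow (X t) 0) with ps1 by reflexivity; ring.
  - eapply ps_deriv_lt_eq_compat;
      [|apply (ps_deriv_lt_mul X (fun s => pspow (X s) (S k))); [exact H|exact IH]].
    change (pspow (X t) (S k)) with (X t ⊗ pspow (X t) k); rewrite psC_INR_S; ring.
Qed.

Lemma pslog1p_deriv X t dX p :
  (forall s, X s O = C0) -> dX O = C0 -> ps_deriv_lt X t dX (S p) ->
  Cderiv (fun s => pslog1p (X s) p) t ((dX ⊗ psinv1p (X t)) p).
Proof.
  intros H0 Hd0 HX; unfold pslog1p.
  eapply Cderiv_eq_compat; [|apply (Cderiv_csum p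
      (fun k s => Cmul (RtoC ((-1) ^ k / INR (S k))) (pspow (X s) (S k) p)));
    intros k Hk; apply (Cderiv_mul (fun _ => _)); [apply Cderiv_const|];
    apply (ps_deriv_lt_pspow X t dX (S p) HX k); lia].
  rewrite (psmul_coef_ext _ _ (psinv1p_upto (X t) p))
    by (intros; apply psinv1p_coef_upto; auto).
  unfold psinv1p_upto; rewrite <- pssum_mult_l, pssum_coef; cbn [csum].
  assert (Hlast : (dX ⊗ (psC (alt_sign p) ⊗ pspow (X t) p)) p = C0).
  { unfold psmul at 1; rewrite csum_S_l, Hd0, csum_zero; [ring|].
    intros i Hi; rewrite psmul_C_l, pspow_coef_low by (auto; lia); ring. }
  rewrite Hlast.
  transitivity (csum p (fun k => (dX ⊗ (psC (alt_sign k) ⊗ pspow (X t) k)) p)); [|ring].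
  apply csum_ext; intros k Hk.
  replace (dX ⊗ (psC (alt_sign k) ⊗ pspow (X t) k))
    with (psC (alt_sign k) ⊗ (dX ⊗ pspow (X t) k)) by ring.
  replace (psC (RtoC (INR (S k))) ⊗ dX ⊗ pspow (X t) k)
    with (psC (RtoC (INR (S k))) ⊗ (dX ⊗ pspow (X t) k)) by ring.
  rewrite !psmul_C_l.
  assert (HI : INR (S k) <> 0) by (apply not_0_INR; lia).
  unfold alt_sign; generalize ((dX ⊗ pspow (X t) k) p); intros [a b].
  unfold RtoC, Cmul, Cadd, C0; simpl; f_equal; field; auto.
Qed.

Lemma psmul_affine_coef_S a x y z b c j :
  (a ⊗ (psC x ⊕ psX ⊗ (psC y ⊗ b ⊕ psC z ⊗ c))) (S j) =
  Cadd (Cmul (a (S j)) x)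
       (Cadd (Cmul y (csum (S j) (fun i => Cmul (a i) (b (j - i)%nat))))
             (Cmul z (csum (S j) (fun i => Cmul (a i) (c (j - i)%nat))))).
Proof.
  replace (a ⊗ (psC x ⊕ psX ⊗ (psC y ⊗ b ⊕ psC z ⊗ c)))
    with (a ⊗ psC x ⊕ a ⊗ (psX ⊗ (psC y ⊗ b ⊕ psC z ⊗ c))) by ring.
  unfold psadd at 1; rewrite psmul_C_r, psmul_Xr_S; f_equal.
  rewrite <- !csum_mult_l, <- csum_add; apply csum_ext; intros.
  unfold psadd; rewrite !psmul_C_l; ring.
Qed.

Lemma psmul_affine_coef_0 a x y z b c :
  a O = C1 -> (a ⊗ (psC x ⊕ psX ⊗ (psC y ⊗ b ⊕ psC z ⊗ c))) O = x.
Proof. intros Ha; rewrite psmul_coef_0; unfold psadd; rewrite psmul_X_0, Ha; unfold psC; simpl; ring. Qed.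

Section Recursion.
Variable m : nat.
Variables Sf Sbf : Z -> vec.
Variable vf : Z -> Cplx.

Definition Fser (n : Z) : ps := fun j => fst (fst (tab m Sf Sbf vf j j n)).
Definition Gser (n : Z) : psvec := fun k j => snd (fst (tab m Sf Sbf vf j j n)) k.
Definition Hser (n : Z) : psvec := fun k j => snd (tab m Sf Sbf vf j j n) k.

Lemma tab_stable j k n : (k <= j)%nat -> tab m Sf Sbf vf j k n = tab m Sf Sbf vf k k n.
Proof.
  induction j as [|j IH]; intros Hk.
  - replace k with O by lia; reflexivity.
  - destruct (Nat.eq_dec k (S j)) as [->|Hne]; [reflexivity|].
    cbn [tab]; rewrite (proj2 (Nat.leb_le k j)) by lia; apply IH; lia.
Qed.

Ltac unfold_tab_top j :=
  cbn [tab]; rewrite (proj2 (Nat.leb_gt (S j) j)) by lia; cbn [fst snd].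

Ltac tab_stable_rhs j :=
  intros; unfold Fser, Gser, Hser;
  repeat match goal with
         | |- context [tab m Sf Sbf vf j ?k ?n] =>
             assert_fails (constr_eq k j); rewrite (tab_stable j k n) by lia
         end;
  reflexivity.

Lemma Fser_0 n : Fser n O = C1.
Proof. reflexivity. Qed.

Lemma Fser_S j n : Fser n (S j) =
  Cadd (Cmul (Cmul (vf n) (vf (n + 1)%Z))
             (csum j (fun k => Cmul (Fser n k) (Fser (n + 1)%Z (j - 1 - k)%nat))))
       (Cadd (dot m (Sf n) (fun k => Gser n k j)) (dot m (fun k => Hser n k j) (Sbf n))).
Proof.
  unfold Fser at 1; unfold_tab_top j.
  f_equal; f_equal; apply csum_ext; tab_stable_rhs j.
Qed.

Lemma csum_tab_F j n f :
  csum (S j) (fun i => Cmul (fst (fst (tab m Sf Sbf vf j i n))) (f i)) =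
  csum (S j) (fun i => Cmul (Fser n i) (f i)).
Proof. apply csum_ext; intros; unfold Fser; rewrite tab_stable by lia; reflexivity. Qed.

Lemma Gser_S n k j : Gser n k (S j) =
  Cadd (Cadd (Cmul (Cmul mi2 (Fser n (S j))) (Sbf (n + 1)%Z k))
             (Cmul (vf (n + 1)%Z)
                   (csum (S j) (fun i => Cmul (Fser n i) (Gser (n + 1)%Z k (j - i)%nat)))))
       (Cmul (Cmul (Cmul mi2 (vf (n + 1)%Z))
                   (csum (S j) (fun i => Cmul (Fser n i) (Fser (n + 1)%Z (j - i)%nat))))
             (Sbf n k)).
Proof.
  unfold Gser at 1; unfold Fser at 1; unfold_tab_top j.
  unfold vadd, vscal, vsum; rewrite !csum_tab_F.
  f_equal; [f_equal; f_equal|f_equal; f_equal]; apply csum_ext; tab_stable_rhs j.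
Qed.

Lemma Hser_S n k j : Hser n k (S j) =
  Cadd (Cadd (Cmul (Cmul mi2 (Fser n (S j))) (Sf (n + 1)%Z k))
             (Cmul (Copp (vf (n + 1)%Z))
                   (csum (S j) (fun i => Cmul (Fser n i) (Hser (n + 1)%Z k (j - i)%nat)))))
       (Cmul (Cmul (Cmul pi2 (vf (n + 1)%Z))
                   (csum (S j) (fun i => Cmul (Fser n i) (Fser (n + 1)%Z (j - i)%nat))))
             (Sf n k)).
Proof.
  unfold Hser at 1; unfold Fser at 1; unfold_tab_top j.
  unfold vadd, vscal, vsum; rewrite !csum_tab_F.
  f_equal; [f_equal; f_equal|f_equal; f_equal]; apply csum_ext; tab_stable_rhs j.
Qed.

(* Chosen so that [G_n = F_n g_n] and [H_n = F_n h_n], see [Gser_factor] and [Hser_factor]. *)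
Definition gser (n : Z) : psvec := fun k =>
  psC (Cmul mi2 (Sbf (n + 1)%Z k)) ⊕ psX ⊗ (psC (vf (n + 1)%Z) ⊗ Gser (n + 1)%Z k ⊕
     psC (Cmul (Cmul mi2 (vf (n + 1)%Z)) (Sbf n k)) ⊗ Fser (n + 1)%Z).
Definition hser (n : Z) : psvec := fun k =>
  psC (Cmul mi2 (Sf (n + 1)%Z k)) ⊕ psX ⊗ (psC (Copp (vf (n + 1)%Z)) ⊗ Hser (n + 1)%Z k ⊕
     psC (Cmul (Cmul pi2 (vf (n + 1)%Z)) (Sf n k)) ⊗ Fser (n + 1)%Z).

Lemma Gser_factor n k : Gser n k = Fser n ⊗ gser n k.
Proof.
  apply functional_extensionality; intros [|j]; unfold gser.
  - rewrite psmul_affine_coef_0 by reflexivity; reflexivity.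
  - rewrite psmul_affine_coef_S, Gser_S; ring.
Qed.

Lemma Hser_factor n k : Hser n k = Fser n ⊗ hser n k.
Proof.
  apply functional_extensionality; intros [|j]; unfold hser.
  - rewrite psmul_affine_coef_0 by reflexivity; reflexivity.
  - rewrite psmul_affine_coef_S, Hser_S; ring.
Qed.

Lemma Fser_rec n : Fser n =
  ps1 ⊕ psX ⊗ (psX ⊗ (psC (Cmul (vf n) (vf (n + 1)%Z)) ⊗ (Fser n ⊗ Fser (n + 1)%Z)) ⊕
               (pdot m (pvC (Sf n)) (Gser n) ⊕ pdot m (Hser n) (pvC (Sbf n)))).
Proof.
  apply functional_extensionality; intros [|j].
  - unfold psadd; rewrite psmul_X_0, Fser_0; unfold ps1; simpl; ring.
  - rewrite Fser_S; unfold psadd at 1; rewrite psmul_X_S; unfold ps1; simpl.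
    unfold psadd, pdot; rewrite !pssum_coef; unfold dot.
    rewrite (csum_ext m (fun k => (pvC (Sf n) k ⊗ Gser n k) j) (fun k => Cmul (Sf n k) (Gser n k j)))
      by (intros; apply psmul_C_l).
    rewrite (csum_ext m (fun k => (Hser n k ⊗ pvC (Sbf n) k) j) (fun k => Cmul (Hser n k j) (Sbf n k)))
      by (intros; apply psmul_C_r).
    replace (Cmul (Cmul (vf n) (vf (n + 1)%Z))
               (csum j (fun k => Cmul (Fser n k) (Fser (n + 1)%Z (j - 1 - k)%nat))))
      with ((psX ⊗ (psC (Cmul (vf n) (vf (n + 1)%Z)) ⊗ (Fser n ⊗ Fser (n + 1)%Z))) j); [ring|].
    destruct j as [|j]; [rewrite psmul_X_0; simpl; ring|].
    rewrite psmul_X_S, psmul_C_l; f_equal; unfold psmul.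
    apply csum_ext; intros; repeat f_equal; lia.
Qed.

Definition Cser (n : Z) : ps := pdot m (pvC (Sf n)) (gser n) ⊕ pdot m (hser n) (pvC (Sbf n)).
Definition Aser (n : Z) : ps := psX ⊗ (psC (Cmul (vf n) (vf (n + 1)%Z)) ⊗ Fser (n + 1)%Z) ⊕ Cser n.

Lemma Gser_eq n : Gser n = pvscal (Fser n) (gser n).
Proof. apply functional_extensionality; intro k; apply Gser_factor. Qed.

Lemma Hser_eq n : Hser n = pvscal (Fser n) (hser n).
Proof. apply functional_extensionality; intro k; apply Hser_factor. Qed.

Lemma Fser_fix n : Fser n = ps1 ⊕ psX ⊗ (Fser n ⊗ Aser n).
Proof.
  rewrite (Fser_rec n) at 1; rewrite Gser_eq, Hser_eq, pdot_scal_r, pdot_scal_l.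
  unfold Aser, Cser; ring.
Qed.

Lemma Fser_inv n : Fser n ⊗ (ps1 ⊖ psX ⊗ Aser n) = ps1.
Proof. transitivity (Fser n ⊖ psX ⊗ (Fser n ⊗ Aser n)); [ring|]. rewrite (Fser_fix n) at 1; ring. Qed.

Lemma gser_rec n : gser n = pvadd (pvscal (psC mi2) (pvC (Sbf (n + 1)%Z)))
  (pvscal (psX ⊗ psC (vf (n + 1)%Z) ⊗ Fser (n + 1)%Z)
          (pvadd (gser (n + 1)%Z) (pvscal (psC mi2) (pvC (Sbf n))))).
Proof.
  apply functional_extensionality; intro k; unfold gser at 1; rewrite Gser_factor.
  unfold pvadd, pvscal, pvC; rewrite !psC_mul; ring.
Qed.

Lemma hser_rec n : hser n = pvadd (pvscal (psC mi2) (pvC (Sf (n + 1)%Z)))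
  (pvscal (⊖ (psX ⊗ psC (vf (n + 1)%Z) ⊗ Fser (n + 1)%Z))
          (pvadd (hser (n + 1)%Z) (pvscal (psC mi2) (pvC (Sf n))))).
Proof.
  apply functional_extensionality; intro k; unfold hser at 1; rewrite Hser_factor.
  unfold pvadd, pvscal, pvC; rewrite !psC_mul, psC_opp.
  unfold mi2, pi2; rewrite !psC_mul, psC_opp; ring.
Qed.

Lemma gser_rec_at n k : gser n k =
  psC (Cmul mi2 (Sbf (n + 1)%Z k)) ⊕
  psX ⊗ (psC (vf (n + 1)%Z) ⊗ Fser (n + 1)%Z ⊗ (gser (n + 1)%Z k ⊕ psC mi2 ⊗ psC (Sbf n k))).
Proof. rewrite (gser_rec n); unfold pvadd, pvscal, pvC; rewrite psC_mul; ring. Qed.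

Lemma hser_rec_at n k : hser n k =
  psC (Cmul mi2 (Sf (n + 1)%Z k)) ⊕
  ⊖ (psX ⊗ (psC (vf (n + 1)%Z) ⊗ Fser (n + 1)%Z ⊗ (hser (n + 1)%Z k ⊕ psC mi2 ⊗ psC (Sf n k)))).
Proof. rewrite (hser_rec n); unfold pvadd, pvscal, pvC; rewrite psC_mul; ring. Qed.

End Recursion.

Lemma Xser_eq m Sf Sbf vf n : Xser m Sf Sbf vf n = Fser m Sf Sbf vf n ⊖ ps1.
Proof.
  apply functional_extensionality; intros [|j]; unfold Xser, pssub, psadd, psopp, ps1; simpl.
  - rewrite Fser_0; ring.
  - unfold FF, Fser; ring.
Qed.

Lemma psinv1p_Xser m Sf Sbf vf n :
  psinv1p (Xser m Sf Sbf vf n) = ps1 ⊖ psX ⊗ Aser m Sf Sbf vf n.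
Proof.
  pose proof (psinv1p_spec (Xser m Sf Sbf vf n) eq_refl) as Hinv.
  rewrite Xser_eq in *; replace (ps1 ⊕ (Fser m Sf Sbf vf n ⊖ ps1)) with (Fser m Sf Sbf vf n) in Hinv by ring.
  transitivity (psinv1p (Fser m Sf Sbf vf n ⊖ ps1) ⊗
                (Fser m Sf Sbf vf n ⊗ (ps1 ⊖ psX ⊗ Aser m Sf Sbf vf n)));
    [rewrite Fser_inv; ring|].
  rewrite psmul_assoc, (psmul_comm _ (Fser _ _ _ _ n)), Hinv; ring.
Qed.

(* The flux is [i P_(n-1)]: the [λ^(-p)] coefficient of [-iλ/(1 + X_(n-1)) = -iλ (1 - μ A_(n-1))]
   cancels the other term of the flux. *)
Lemma flux_eq m Sf Sbf vf p n : flux m Sf Sbf vf p n = Cmul Ci (Cser m Sf Sbf vf (n - 1)%Z p).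
Proof.
  unfold flux; rewrite psinv1p_Xser; unfold pssub, psadd at 1, psopp; rewrite psmul_X_S.
  unfold Aser, psadd; replace (n - 1 + 1)%Z with n by ring.
  destruct p as [|p].
  - rewrite psmul_X_0; unfold ps1; simpl; ring.
  - rewrite psmul_X_S, psmul_C_l, ps1p_eq, Xser_eq.
    replace (ps1 ⊕ (Fser m Sf Sbf vf n ⊖ ps1)) with (Fser m Sf Sbf vf n) by ring.
    unfold ps1; simpl; ring.
Qed.

Lemma psC_Ci_sqr : psC Ci ⊗ psC Ci = ⊖ ps1.
Proof.
  rewrite <- psC_mul, <- psC_1, <- psC_opp; f_equal.
  unfold Ci, Cmul, Copp, C1; simpl; f_equal; ring.
Qed.

Lemma psC_half_double : psC half ⊗ (ps1 ⊕ ps1) = ps1.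
Proof.
  rewrite <- psC_1, <- psC_add, <- psC_mul; f_equal.
  unfold half, RtoC, Cmul, Cadd, C1; simpl; f_equal; field.
Qed.

(* Doubling both sides lets [ring] use [psC_half_double] to clear the factors [1/2]. *)
Lemma ps_double_inj x y : (ps1 ⊕ ps1) ⊗ x = (ps1 ⊕ ps1) ⊗ y -> x = y.
Proof.
  intros H.
  transitivity (psC half ⊗ (ps1 ⊕ ps1) ⊗ x); [rewrite psC_half_double; ring|].
  rewrite <- psmul_assoc, H, psmul_assoc, psC_half_double; ring.
Qed.

Ltac ps_expand :=
  repeat (rewrite ?pdot_add_l, ?pdot_add_r, ?pdot_scal_l, ?pdot_scal_r);
  unfold mi2, pi2; repeat (rewrite ?psC_mul, ?psC_add, ?psC_sub, ?psC_opp, ?psC_dot);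
  unfold pvadd, pvscal, pvC; cbv beta;
  do 4 apply ps_double_inj; ring [psC_Ci_sqr psC_half_double].

Section Flow.
Variable m : nat.
Variables Sf Sbf : Z -> vec.
Variable vf : Z -> Cplx.
Variable c : Cplx.

Definition S_flow (n : Z) : vec := fun k =>
  Cmul (Copp Ci) (Csub (Cmul (vf n) (Cadd (Sf (n + 1)%Z k) (Sf (n - 1)%Z k))) (Cmul c (Sf n k))).
Definition Sb_flow (n : Z) : vec := fun k =>
  Cmul (Copp Ci)
       (Cadd (Copp (Cmul (vf n) (Cadd (Sbf (n + 1)%Z k) (Sbf (n - 1)%Z k)))) (Cmul c (Sbf n k))).
Definition w_coupling (n : Z) : Cplx :=
  Csub (Cadd (dot m (Sf (n + 1)%Z) (Sbf n)) (dot m (Sf n) (Sbf (n + 1)%Z)))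
       (Cadd (dot m (Sf n) (Sbf (n - 1)%Z)) (dot m (Sf (n - 1)%Z) (Sbf n))).
Definition v_flow (n : Z) : Cplx := Cmul half (Cmul (vf n) (w_coupling n)).

Local Notation F := (Fser m Sf Sbf vf).
Local Notation g := (gser m Sf Sbf vf).
Local Notation h := (hser m Sf Sbf vf).
Local Notation P := (Cser m Sf Sbf vf).
Local Notation A := (Aser m Sf Sbf vf).

Definition Kser (n : Z) : ps :=
  ⊖ psC (Cmul half (w_coupling n)) ⊕ psC Ci ⊗ P n ⊖ psC Ci ⊗ P (n - 1)%Z.
Definition Fser_dot (n : Z) : ps := F n ⊗ Kser n.
Definition gser_dot (n : Z) : psvec :=
  pvadd (pvadd (pvadd (pvadd
   (pvscal (psC Ci ⊗ psC (vf (n + 1)%Z) ⊗ F (n + 1)%Z)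
           (pvadd (g (n + 1)%Z) (pvscal (psC mi2) (pvC (Sbf n)))))
   (pvscal (⊖ (psC Ci ⊗ P n)) (g n)))
   (pvscal (⊖ (psC Ci ⊗ psC c)) (g n)))
   (pvscal (psC half ⊗ psC (vf n) ⊗ psC (vf (n + 1)%Z) ⊗ psX ⊗ F (n + 1)%Z)
           (pvadd (pvC (Sbf (n - 1)%Z)) (pvC (Sbf (n + 1)%Z)))))
   (pvscal (psC half ⊗ P n) (pvC (Sbf (n + 1)%Z))).
Definition hser_dot (n : Z) : psvec :=
  pvadd (pvadd (pvadd (pvadd
   (pvscal (⊖ (psC Ci ⊗ psC (vf (n + 1)%Z) ⊗ F (n + 1)%Z))
           (pvadd (h (n + 1)%Z) (pvscal (psC mi2) (pvC (Sf n)))))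
   (pvscal (⊖ (psC Ci ⊗ P n)) (h n)))
   (pvscal (psC Ci ⊗ psC c) (h n)))
   (pvscal (psC half ⊗ psC (vf n) ⊗ psC (vf (n + 1)%Z) ⊗ psX ⊗ F (n + 1)%Z)
           (pvadd (pvC (Sf (n - 1)%Z)) (pvC (Sf (n + 1)%Z)))))
   (pvscal (psC half ⊗ P n) (pvC (Sf (n + 1)%Z))).

(* Derivatives of the right-hand sides of [gser_rec] and [hser_rec], by the Leibniz rule. *)
Definition vFser_dot (n : Z) : ps := psC (v_flow n) ⊗ F n ⊕ psC (vf n) ⊗ Fser_dot n.
Definition gser_rec_dot (n : Z) : psvec := fun k =>
  psC (Cmul mi2 (Sb_flow (n + 1)%Z k)) ⊕
  psX ⊗ (vFser_dot (n + 1)%Z ⊗ (g (n + 1)%Z k ⊕ psC mi2 ⊗ psC (Sbf n k)) ⊕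
         psC (vf (n + 1)%Z) ⊗ F (n + 1)%Z ⊗ (gser_dot (n + 1)%Z k ⊕ psC mi2 ⊗ psC (Sb_flow n k))).
Definition hser_rec_dot (n : Z) : psvec := fun k =>
  psC (Cmul mi2 (S_flow (n + 1)%Z k)) ⊕
  ⊖ (psX ⊗ (vFser_dot (n + 1)%Z ⊗ (h (n + 1)%Z k ⊕ psC mi2 ⊗ psC (Sf n k)) ⊕
            psC (vf (n + 1)%Z) ⊗ F (n + 1)%Z ⊗ (hser_dot (n + 1)%Z k ⊕ psC mi2 ⊗ psC (S_flow n k)))).

Lemma gser_dot_defect n k : gser_dot n k = gser_rec_dot n k ⊕
  (psC half ⊗ psC (vf (n + 1)%Z) ⊗ (psC (Sbf (n + 1 + 1)%Z k) ⊕ psC (Sbf n k))) ⊗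
  (F (n + 1)%Z ⊗ (ps1 ⊖ psX ⊗ A (n + 1)%Z) ⊖ ps1).
Proof.
  unfold gser_rec_dot, gser_dot, vFser_dot, Fser_dot, Kser, v_flow, w_coupling,
    S_flow, Sb_flow, Aser, Cser.
  replace (n + 1 - 1)%Z with n by ring.
  rewrite (gser_rec m Sf Sbf vf n), (hser_rec m Sf Sbf vf n),
    (gser_rec m Sf Sbf vf (n + 1)), (hser_rec m Sf Sbf vf (n + 1)).
  ps_expand.
Qed.

Lemma hser_dot_defect n k : hser_dot n k = hser_rec_dot n k ⊕
  (⊖ (psC half ⊗ psC (vf (n + 1)%Z) ⊗ (psC (Sf (n + 1 + 1)%Z k) ⊕ psC (Sf n k)))) ⊗
  (F (n + 1)%Z ⊗ (ps1 ⊖ psX ⊗ A (n + 1)%Z) ⊖ ps1).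
Proof.
  unfold hser_rec_dot, hser_dot, vFser_dot, Fser_dot, Kser, v_flow, w_coupling,
    S_flow, Sb_flow, Aser, Cser.
  replace (n + 1 - 1)%Z with n by ring.
  rewrite (gser_rec m Sf Sbf vf n), (hser_rec m Sf Sbf vf n),
    (gser_rec m Sf Sbf vf (n + 1)), (hser_rec m Sf Sbf vf (n + 1)).
  ps_expand.
Qed.

Lemma gser_dot_rec n k : gser_dot n k = gser_rec_dot n k.
Proof. rewrite gser_dot_defect, Fser_inv; ring. Qed.

Lemma hser_dot_rec n k : hser_dot n k = hser_rec_dot n k.
Proof. rewrite hser_dot_defect, Fser_inv; ring. Qed.

Definition Cser_prev_head (n : Z) : ps :=
  psC mi2 ⊗ (pdot m (pvC (Sf (n - 1)%Z)) (pvC (Sbf n)) ⊕ pdot m (pvC (Sf n)) (pvC (Sbf (n - 1)%Z))).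
Definition Cser_prev_tail (n : Z) : ps :=
  pdot m (pvC (Sf (n - 1)%Z)) (g n) ⊖ pdot m (h n) (pvC (Sbf (n - 1)%Z)).

Lemma Cser_prev_split n :
  P (n - 1)%Z = Cser_prev_head n ⊕ psX ⊗ psC (vf n) ⊗ F n ⊗ Cser_prev_tail n.
Proof.
  unfold Cser at 1, Cser_prev_head, Cser_prev_tail.
  rewrite (gser_rec m Sf Sbf vf (n - 1)), (hser_rec m Sf Sbf vf (n - 1)).
  replace (n - 1 + 1)%Z with n by ring.
  ps_expand.
Qed.

Lemma pvC_S_flow n : pvC (S_flow n) =
  pvscal (⊖ psC Ci) (pvadd (pvscal (psC (vf n)) (pvadd (pvC (Sf (n + 1)%Z)) (pvC (Sf (n - 1)%Z))))
                           (pvscal (⊖ psC c) (pvC (Sf n)))).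
Proof.
  apply functional_extensionality; intro k; unfold pvC, pvscal, pvadd, S_flow, Csub.
  rewrite !psC_mul, !psC_add, !psC_opp, !psC_mul, !psC_add; ring.
Qed.

Lemma pvC_Sb_flow n : pvC (Sb_flow n) =
  pvscal (⊖ psC Ci) (pvadd (pvscal (⊖ psC (vf n)) (pvadd (pvC (Sbf (n + 1)%Z)) (pvC (Sbf (n - 1)%Z))))
                           (pvscal (psC c) (pvC (Sbf n)))).
Proof.
  apply functional_extensionality; intro k; unfold pvC, pvscal, pvadd, Sb_flow.
  rewrite !psC_mul, !psC_add, !psC_opp, !psC_mul, !psC_add; ring.
Qed.

Definition Cser_dot (n : Z) : ps :=
  pdot m (pvC (S_flow n)) (g n) ⊕ pdot m (pvC (Sf n)) (gser_dot n) ⊕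
  pdot m (hser_dot n) (pvC (Sbf n)) ⊕ pdot m (h n) (pvC (Sb_flow n)).
Definition Aser_dot (n : Z) : ps :=
  psX ⊗ (psC (Cadd (Cmul (v_flow n) (vf (n + 1)%Z)) (Cmul (vf n) (v_flow (n + 1)%Z))) ⊗ F (n + 1)%Z ⊕
         psC (Cmul (vf n) (vf (n + 1)%Z)) ⊗ Fser_dot (n + 1)%Z) ⊕ Cser_dot n.
Definition Kser_head (n : Z) : ps :=
  ⊖ psC (Cmul half (w_coupling n)) ⊕ psC Ci ⊗ P n ⊖ psC Ci ⊗ Cser_prev_head n.

Lemma Kser_head_identity n :
  Kser_head n ⊗ (ps1 ⊖ psX ⊗ A n) ⊖ psC Ci ⊗ psX ⊗ psC (vf n) ⊗ Cser_prev_tail n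
  = psX ⊗ Aser_dot n.
Proof.
  unfold Aser_dot, Cser_dot; rewrite pvC_S_flow, pvC_Sb_flow.
  unfold Kser_head, Cser_prev_head, Cser_prev_tail, gser_dot, hser_dot, Fser_dot, Kser,
    v_flow, w_coupling, Aser, Cser.
  replace (n + 1 - 1)%Z with n by ring.
  rewrite (gser_rec m Sf Sbf vf n), (hser_rec m Sf Sbf vf n),
    (gser_rec m Sf Sbf vf (n + 1)), (hser_rec m Sf Sbf vf (n + 1)).
  ps_expand.
Qed.

(* Differentiated form of [Fser_fix]: [F K = μ (F K A + F A_t)]. *)
Lemma Fser_dot_rec n : Fser_dot n = psX ⊗ (Fser_dot n ⊗ A n ⊕ F n ⊗ Aser_dot n).
Proof.
  assert (HK : Kser n ⊗ (ps1 ⊖ psX ⊗ A n) = psX ⊗ Aser_dot n).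
  { rewrite <- Kser_head_identity.
    replace (Kser n) with (Kser_head n ⊖ psC Ci ⊗ psX ⊗ psC (vf n) ⊗ F n ⊗ Cser_prev_tail n)
      by (unfold Kser, Kser_head; rewrite Cser_prev_split; ring).
    transitivity (Kser_head n ⊗ (ps1 ⊖ psX ⊗ A n) ⊖ psC Ci ⊗ psX ⊗ psC (vf n) ⊗ Cser_prev_tail n
                  ⊗ (F n ⊗ (ps1 ⊖ psX ⊗ A n))); [ring|].
    rewrite Fser_inv; ring. }
  unfold Fser_dot.
  transitivity (F n ⊗ Kser n ⊖ F n ⊗ (Kser n ⊗ (ps1 ⊖ psX ⊗ A n) ⊖ psX ⊗ Aser_dot n));
    [rewrite HK|]; ring.
Qed.

Lemma Kser_coef n p : Kser n p =
  Csub (Cadd (Copp (psC (Cmul half (w_coupling n)) p)) (Cmul Ci (P n p))) (Cmul Ci (P (n - 1)%Z p)).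
Proof. unfold Kser, pssub, psadd, psopp; rewrite !psmul_C_l; reflexivity. Qed.

Lemma v_flow_div n : vf n <> C0 -> Cdiv (v_flow n) (vf n) = Cmul half (w_coupling n).
Proof.
  intros Hv; unfold Cdiv, v_flow.
  transitivity (Cmul (Cmul half (w_coupling n)) (Cmul (vf n) (Cinv (vf n)))); [ring|].
  rewrite Cmul_Cinv_r by exact Hv; ring.
Qed.

End Flow.

Section TimeDerivative.
Variable m : nat.
Variable c : Cplx.
Variables S Sb : Z -> R -> vec.
Variable v : Z -> R -> Cplx.
Variable t : R.
Local Notation St s := (fun n : Z => S n s).
Local Notation Sbt s := (fun n : Z => Sb n s).
Local Notation vt s := (fun n : Z => v n s).

Hypothesis dS : forall n k, (k < m)%nat ->
  Cderiv (fun s => S n s k) t (S_flow (St t) (vt t) c n k).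
Hypothesis dSb : forall n k, (k < m)%nat ->
  Cderiv (fun s => Sb n s k) t (Sb_flow (Sbt t) (vt t) c n k).
Hypothesis dv : forall n, Cderiv (fun s => v n s) t (v_flow m (St t) (Sbt t) (vt t) n).

Local Notation F s n := (Fser m (St s) (Sbt s) (vt s) n).
Local Notation g s n := (gser m (St s) (Sbt s) (vt s) n).
Local Notation h s n := (hser m (St s) (Sbt s) (vt s) n).
Local Notation F_t n := (Fser_dot m (St t) (Sbt t) (vt t) n).
Local Notation g_t n := (gser_dot m (St t) (Sbt t) (vt t) c n).
Local Notation h_t n := (hser_dot m (St t) (Sbt t) (vt t) c n).

(* One more coefficient at [n] needs one coefficient fewer at [n + 1], thanks to the factor [μ]. *)
Lemma gser_deriv_step N n k : (k < m)%nat ->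
  ps_deriv_lt (fun s => F s (n + 1)%Z) t (F_t (n + 1)%Z) N ->
  ps_deriv_lt (fun s => g s (n + 1)%Z k) t (g_t (n + 1)%Z k) N ->
  ps_deriv_lt (fun s => g s n k) t (g_t n k) (Datatypes.S N).
Proof.
  intros Hk HF Hg.
  eapply ps_deriv_lt_ext; [intro s; symmetry; apply gser_rec_at|].
  eapply ps_deriv_lt_eq_compat.
  2:{ apply ps_deriv_lt_add; [|apply ps_deriv_lt_X, ps_deriv_lt_mul; [apply ps_deriv_lt_mul|]].
      - apply ps_deriv_lt_C, (Cderiv_mul (fun _ => mi2)); [apply Cderiv_const|apply dSb; auto].
      - apply (ps_deriv_lt_C (fun s => v (n + 1)%Z s)), dv.
      - exact HF.
      - apply ps_deriv_lt_add; [exact Hg|apply ps_deriv_lt_mul; [apply ps_deriv_lt_const|]].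
        apply (ps_deriv_lt_C (fun s => Sb n s k)), dSb; auto. }
  rewrite (gser_dot_rec m (St t) (Sbt t) (vt t) c n k); unfold gser_rec_dot, vFser_dot.
  repeat rewrite ?psC_add, ?psC_mul, ?psC_0; ring.
Qed.

Lemma hser_deriv_step N n k : (k < m)%nat ->
  ps_deriv_lt (fun s => F s (n + 1)%Z) t (F_t (n + 1)%Z) N ->
  ps_deriv_lt (fun s => h s (n + 1)%Z k) t (h_t (n + 1)%Z k) N ->
  ps_deriv_lt (fun s => h s n k) t (h_t n k) (Datatypes.S N).
Proof.
  intros Hk HF Hh.
  eapply ps_deriv_lt_ext; [intro s; symmetry; apply hser_rec_at|].
  eapply ps_deriv_lt_eq_compat.
  2:{ apply ps_deriv_lt_add;
        [|apply ps_deriv_lt_opp, ps_deriv_lt_X, ps_deriv_lt_mul; [apply ps_deriv_lt_mul|]].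
      - apply ps_deriv_lt_C, (Cderiv_mul (fun _ => mi2)); [apply Cderiv_const|apply dS; auto].
      - apply (ps_deriv_lt_C (fun s => v (n + 1)%Z s)), dv.
      - exact HF.
      - apply ps_deriv_lt_add; [exact Hh|apply ps_deriv_lt_mul; [apply ps_deriv_lt_const|]].
        apply (ps_deriv_lt_C (fun s => S n s k)), dS; auto. }
  rewrite (hser_dot_rec m (St t) (Sbt t) (vt t) c n k); unfold hser_rec_dot, vFser_dot.
  repeat rewrite ?psC_add, ?psC_mul, ?psC_0; ring.
Qed.

Lemma Fser_deriv_step N n :
  ps_deriv_lt (fun s => F s n) t (F_t n) N ->
  ps_deriv_lt (fun s => F s (n + 1)%Z) t (F_t (n + 1)%Z) N ->
  (forall k, (k < m)%nat -> ps_deriv_lt (fun s => g s n k) t (g_t n k) N) ->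
  (forall k, (k < m)%nat -> ps_deriv_lt (fun s => h s n k) t (h_t n k) N) ->
  ps_deriv_lt (fun s => F s n) t (F_t n) (Datatypes.S N).
Proof.
  intros HF HF1 Hg Hh.
  eapply ps_deriv_lt_ext; [intro s; symmetry; apply Fser_fix|].
  eapply ps_deriv_lt_eq_compat.
  2:{ apply ps_deriv_lt_add; [apply ps_deriv_lt_const|apply ps_deriv_lt_X, ps_deriv_lt_mul; [exact HF|]].
      unfold Aser, Cser.
      apply ps_deriv_lt_add; [apply (ps_deriv_lt_le _ _ _ (Datatypes.S N)); [lia|]|apply ps_deriv_lt_add].
      - apply ps_deriv_lt_X, ps_deriv_lt_mul; [|exact HF1].
        apply (ps_deriv_lt_C (fun s => Cmul (v n s) (v (n + 1)%Z s))), Cderiv_mul; apply dv.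
      - apply (ps_deriv_lt_pdot m (fun s => pvC (S n s)) (fun s => g s n) t
                (pvC (S_flow (St t) (vt t) c n))); [|exact Hg].
        intros k Hk; apply (ps_deriv_lt_pvC (fun s => S n s)), dS; auto.
      - apply (ps_deriv_lt_pdot m (fun s => h s n) (fun s => pvC (Sb n s)) t
                (h_t n) (pvC (Sb_flow (Sbt t) (vt t) c n))); [exact Hh|].
        intros k Hk; apply (ps_deriv_lt_pvC (fun s => Sb n s)), dSb; auto. }
  transitivity (psX ⊗ (F_t n ⊗ Aser m (St t) (Sbt t) (vt t) n
                       ⊕ F t n ⊗ Aser_dot m (St t) (Sbt t) (vt t) c n));
    [unfold Aser_dot, Cser_dot, Aser, Cser; ring|symmetry; apply Fser_dot_rec].
Qed.

Lemma flow_deriv_lt N : forall n : Z,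
  ps_deriv_lt (fun s => F s n) t (F_t n) N /\
  (forall k, (k < m)%nat -> ps_deriv_lt (fun s => g s n k) t (g_t n k) N) /\
  (forall k, (k < m)%nat -> ps_deriv_lt (fun s => h s n k) t (h_t n k) N).
Proof.
  induction N as [|N IH]; intros n.
  - split; [|split]; intros; intros i Hi; lia.
  - destruct (IH n) as [HF [Hg Hh]], (IH (n + 1)%Z) as [HF1 [Hg1 Hh1]].
    split; [|split].
    + apply Fser_deriv_step; auto.
    + intros k Hk; apply gser_deriv_step; auto.
    + intros k Hk; apply hser_deriv_step; auto.
Qed.

Lemma Fser_deriv n i : Cderiv (fun s => F s n i) t (F_t n i).
Proof. apply (proj1 (flow_deriv_lt (Datatypes.S i) n)); lia. Qed.
Lemma Fser_dot_coef_0 n : F_t n O = C0.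
Proof.
  eapply Cderiv_unique; [apply Fser_deriv|].
  apply (Cderiv_ext (fun _ => C1)); [intro s; rewrite Fser_0; reflexivity|apply Cderiv_const].
Qed.

(* [(log (1 + X_n))_t = X_(n,t) / (1 + X_n) = F_t / F = K]. *)
Lemma rho_deriv p n :
  Cderiv (fun s => rho m (St s) (Sbt s) (vt s) p n) t (Kser m (St t) (Sbt t) (vt t) n p).
Proof.
  eapply Cderiv_eq_compat; [|apply (pslog1p_deriv (fun s => Xser m (St s) (Sbt s) (vt s) n) t (F_t n))].
  - rewrite psinv1p_Xser; unfold Fser_dot.
    replace (F t n ⊗ Kser m (St t) (Sbt t) (vt t) n ⊗ (ps1 ⊖ psX ⊗ Aser m (St t) (Sbt t) (vt t) n))
      with (Kser m (St t) (Sbt t) (vt t) n ⊗ (F t n ⊗ (ps1 ⊖ psX ⊗ Aser m (St t) (Sbt t) (vt t) n)))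
      by ring.
    rewrite Fser_inv, psmul_comm, psmul_1_l; reflexivity.
  - intro s; reflexivity.
  - apply Fser_dot_coef_0.
  - intros i Hi; apply (Cderiv_ext (fun s => Cadd (F s n i) (Copp (ps1 i)))).
    + intro s; rewrite Xser_eq; reflexivity.
    + eapply Cderiv_eq_compat; [|apply Cderiv_add; [apply Fser_deriv|apply Cderiv_const]]; ring.
Qed.

End TimeDerivative.

Lemma Cderiv_solve_Ci f t d r : Cderiv f t d -> Cmul Ci d = r -> Cderiv f t (Cmul (Copp Ci) r).
Proof. intros Hd Ed; rewrite <- (Ci_mul_inj d r Ed); exact Hd. Qed.

Theorem proposition3p1
  (m : nat) (c : Cplx) (S Sb : Z -> R -> vec) (v : Z -> R -> Cplx)
  (Hv0 : forall n t, v n t <> C0)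
  (HS : forall n t k, (k < m)%nat ->
     exists d, Cderiv (fun s => S n s k) t d /\
       Cmul Ci d = Csub (Cmul (v n t) (Cadd (S (n + 1)%Z t k) (S (n - 1)%Z t k)))
                        (Cmul c (S n t k)))
  (HSb : forall n t k, (k < m)%nat ->
     exists d, Cderiv (fun s => Sb n s k) t d /\
       Cmul Ci d = Cadd (Copp (Cmul (v n t) (Cadd (Sb (n + 1)%Z t k) (Sb (n - 1)%Z t k))))
                        (Cmul c (Sb n t k)))
  (Hv : forall n t,
     exists d, Cderiv (fun s => v n s) t d /\
       d = Cmul half (Cmul (v n t)
             (Csub (Cadd (dot m (S (n + 1)%Z t) (Sb n t)) (dot m (S n t) (Sb (n + 1)%Z t)))
                   (Cadd (dot m (S n t) (Sb (n - 1)%Z t)) (dot m (S (n - 1)%Z t) (Sb n t))))))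
  : forall (p : nat) (n : Z) (t : R),
      exists dv dr,
        Cderiv (fun s => v n s) t dv /\
        Cderiv (fun s => rho m (fun k => S k s) (fun k => Sb k s) (fun k => v k s) p n) t dr /\
        Cadd (match p with O => Cdiv dv (v n t) | _ => C0 end) dr
        = Csub (flux m (fun k => S k t) (fun k => Sb k t) (fun k => v k t) p (n + 1)%Z)
               (flux m (fun k => S k t) (fun k => Sb k t) (fun k => v k t) p n).
Proof.
  intros p n t.
  destruct (Hv n t) as [dv [Hdv Edv]].
  exists dv, (Kser m (fun k => S k t) (fun k => Sb k t) (fun k => v k t) n p).
  split; [exact Hdv|split].
  - apply (rho_deriv m c).
    + intros n' k Hk; destruct (HS n' t k Hk) as [d [Hd Ed]]; exact (Cderiv_solve_Ci _ _ _ _ Hd Ed).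
    + intros n' k Hk; destruct (HSb n' t k Hk) as [d [Hd Ed]]; exact (Cderiv_solve_Ci _ _ _ _ Hd Ed).
    + intros n'; destruct (Hv n' t) as [d [Hd ->]]; exact Hd.
  - rewrite Kser_coef, !flux_eq; replace (n + 1 - 1)%Z with n by ring.
    destruct p as [|p]; unfold psC; simpl; [|ring].
    replace dv with (v_flow m (fun k => S k t) (fun k => Sb k t) (fun k => v k t) n) by (rewrite Edv; reflexivity).
    rewrite v_flow_div by apply Hv0; ring.
Qed.
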